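(* Let $T:\Omega\to\Omega$ be measurable and $\mu$ a $T$-invariant probability measure, and let $U\subset\Omega$ with $\mu(U)>0$. Then for every $L\in\mathbb{N}$, $$\mathbb{P}(Z^L_U\ge1)=\mu(U)\sum_{j=1}^{L}\alpha_1(j,U).$$ If moreover $U_n\subset\Omega$ is a nested sequence with $\mu(U_n)\to0$, such that for every $L$ the limit $\alpha_1(L)=\lim_{n\to\infty}\alpha_1(L,U_n)$ exists and $\alpha_1=\lim_{L\to\infty}\alpha_1(L)>0$, then $$\lim_{L\to\infty}\lim_{n\to\infty}\frac{\mathbb{P}(Z^L_{U_n}\ge1)}{L\,\mu(U_n)}=\alpha_1.$$
   Context: $\mathbb{P}=\mathbb{P}_\mu$. $Z^L_U=\sum_{j=0}^{L-1}\mathbbm{1}_U\circ T^j$, so $\{Z^L_U\ge1\}$ is the set of points entering $U$ at some time $0\le j<L$. $\tau_U(x)=\min\{j\ge1:T^jx\in U\}$ is the first return/entry time, $\mu_U(A)=\mu(A\cap U)/\mu(U)$, and $\alpha_1(L,U)=\mu_U(L\le\tau_U)$. *)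

From HB Require Import structures.
From mathcomp Require Import all_boot all_order all_algebra.
From mathcomp Require Import all_classical all_reals all_analysis.
Set Implicit Arguments. Unset Strict Implicit. Unset Printing Implicit Defensive.
Import Order.TTheory GRing.Theory Num.Theory.
Import numFieldNormedType.Exports.
Local Open Scope classical_set_scope.
Local Open Scope ring_scope.

Section Defs.
Context {d : measure_display} {Omega : measurableType d} {R : realType}.
Variables (mu : probability Omega R) (T : Omega -> Omega).

Definition PR (A : set Omega) : R := fine (mu A).

Definition Z (L : nat) (U : set Omega) (x : Omega) : nat :=
  (\sum_(0 <= j < L) ((iter j T x \in U) : nat))%N.

(* L <= tau_U x, where tau_U x = min {j >= 1 | T^j x \in U} (= +oo if empty) *)
Definition tau_ge (L : nat) (U : set Omega) (x : Omega) : Prop :=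
  forall j : nat, (0 < j < L)%N -> ~ U (iter j T x).

Definition alpha1 (L : nat) (U : set Omega) : R :=
  PR (U `&` [set x | tau_ge L U x]) / PR U.
End Defs.

(** A point enters [U] before time [L + 1] iff it lies in [U] or its image
    enters [U] before time [L], and the points of [U] whose image does not
    enter [U] before time [L] are exactly those with [L + 1 <= τ_U]. By
    T-invariance, [P(Z^(L+1)_U >= 1) = P(Z^L_U >= 1) + μ(U) α_1(L + 1, U)],
    which telescopes to the first identity. Dividing by [L μ(U_n)] makes the
    ratio the Cesàro mean of [α_1(1, U_n), ..., α_1(L, U_n)], so Cesàro's
    theorem gives the double limit. *)
From HB Require Import structures.
From mathcomp Require Import all_boot all_order all_algebra.
From mathcomp Require Import all_classical all_reals all_analysis.
Import Order.TTheory GRing.Theory Num.Theory.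
Import numFieldNormedType.Exports.
Local Open Scope classical_set_scope.
Local Open Scope ring_scope.

Section entry_set.
Context {d : measure_display} {Omega : measurableType d} {R : realType}.
Variables (mu : probability Omega R) (T : Omega -> Omega).

Definition entry_set (L : nat) (U : set Omega) : set Omega :=
  [set x | (1 <= Z T L U x)%N].

Lemma ZS L U x : Z T L.+1 U x = ((x \in U) + Z T L U (T x))%N.
Proof.
rewrite /Z big_nat_recl //; congr (_ + _)%N.
by apply: eq_bigr => j _; rewrite iterSr.
Qed.

Lemma entry_setP L U x :
  entry_set L U x <-> exists2 j, (j < L)%N & U (iter j T x).
Proof.
elim: L x => [|L IH] x.
  by rewrite /entry_set /= /Z big_geq //; split => // -[].
rewrite /entry_set /= ZS; split.
  case: (boolP (x \in U)) => [/set_mem Ux _|_]; first by exists 0%N.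
  by rewrite add0n => /IH[j jL Uj]; exists j.+1; rewrite ?iterSr.
case=> -[_ Ux|j jL Uj]; first by rewrite (mem_set Ux).
have : entry_set L U (T x) by apply/IH; exists j; rewrite -?iterSr.
by move/leq_trans; apply; rewrite leq_addl.
Qed.

Lemma entry_set0 U : entry_set 0 U = set0.
Proof. by apply/seteqP; split => x // /entry_setP[]. Qed.

Lemma entry_setS L U : entry_set L.+1 U = U `|` T @^-1` entry_set L U.
Proof.
apply/seteqP; split => x; rewrite /entry_set /= ZS.
  by case: (boolP (x \in U)) => [/set_mem|_]; [left | right].
case=> [Ux|h]; first by rewrite (mem_set Ux).
by apply: leq_trans h (leq_addl _ _).
Qed.

Lemma setD_preimage_entry_set L U :
  U `\` T @^-1` entry_set L U = U `&` [set x | tau_ge T L.+1 U x].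
Proof.
apply/seteqP; split => x /= [Ux h]; split => //.
  move=> [|j] // /andP[_ jL] Uj; apply: h; apply/entry_setP.
  by exists j; rewrite -?iterSr.
by case/entry_setP => j jL Uj; apply: (h j.+1); rewrite ?iterSr.
Qed.

Hypothesis mT : measurable_fun setT T.
Hypothesis T_invariant : forall A, measurable A -> mu (T @^-1` A) = mu A.

Lemma measurable_preimage A : measurable A -> measurable (T @^-1` A).
Proof. by move=> mA; rewrite -[_ @^-1` _]setTI; apply: mT. Qed.

Lemma measurable_entry_set L U : measurable U -> measurable (entry_set L U).
Proof.
move=> mU; elim: L => [|L IH]; first by rewrite entry_set0.
by rewrite entry_setS; apply: measurableU => //; apply: measurable_preimage.
Qed.

Lemma PR_entry_setS L U : measurable U ->
  PR mu (entry_set L.+1 U) =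
  PR mu (entry_set L U) + PR mu (U `&` [set x | tau_ge T L.+1 U x]).
Proof.
move=> mU; set A := T @^-1` entry_set L U.
have mA : measurable A by apply/measurable_preimage/measurable_entry_set.
have -> : entry_set L.+1 U = A `|` (U `\` A).
  by rewrite entry_setS setDE setUIr setUCr setIT setUC.
rewrite -setD_preimage_entry_set /PR measureU //; last 2 first.
- exact: measurableD.
- by rewrite setDIK.
rewrite fineD ?fin_num_measure //; last exact: measurableD.
congr (fine _ + _); exact/T_invariant/measurable_entry_set.
Qed.

Lemma PR_entry_set L U : measurable U ->
  PR mu (entry_set L U) =
  \sum_(1 <= j < L.+1) PR mu (U `&` [set x | tau_ge T j U x]).
Proof.
move=> mU; elim: L => [|L IH].
  by rewrite entry_set0 big_geq // /PR measure0.
by rewrite big_nat_recr //= -IH PR_entry_setS.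
Qed.

Lemma PR_neq0 U : measurable U -> (0 < mu U)%E -> PR mu U != 0.
Proof.
move=> mU mU0; rewrite gt_eqF // fine_gt0 // mU0 /=.
by have /fin_numPlt/andP[] := fin_num_measure mu U mU.
Qed.

Lemma PR_entry_set_alpha1 L U : measurable U -> (0 < mu U)%E ->
  PR mu (entry_set L U) = PR mu U * \sum_(1 <= j < L.+1) alpha1 mu T j U.
Proof.
move=> mU mU0; rewrite PR_entry_set // mulr_sumr.
by apply: eq_bigr => j _; rewrite /alpha1 mulrCA divff ?mulr1 ?PR_neq0.
Qed.

Lemma entry_ratio_alpha1 L U : measurable U -> (0 < mu U)%E ->
  PR mu (entry_set L U) / (L%:R * PR mu U) =
  L%:R^-1 * \sum_(1 <= j < L.+1) alpha1 mu T j U.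
Proof.
move=> mU mU0; rewrite PR_entry_set_alpha1 // invfM mulrCA mulrA.
by rewrite -mulrA [_ / _]mulrC mulKf ?PR_neq0.
Qed.

End entry_set.

Lemma cvg_sum_nat {R : realType} (f : nat -> nat -> R) (a : nat -> R) m n :
  (forall j, f j @ \oo --> a j) ->
  (fun k => \sum_(m <= j < n) f j k) @ \oo --> \sum_(m <= j < n) a j.
Proof. by move=> fa; apply: cvg_big => //; apply: add_continuous. Qed.

Lemma cesaro_big_nat {R : archiRealFieldType} (u : R ^nat) (l : R) :
  u @ \oo --> l ->
  (fun L => L%:R^-1 * \sum_(1 <= j < L.+1) u j) @ \oo --> l.
Proof.
move=> ul; rewrite -cvg_shiftS /=.
have -> : (fun n => n.+1%:R^-1 * \sum_(1 <= j < n.+2) u j) =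
          arithmetic_mean (fun k => u k.+1).
  by apply: funext => n; rewrite /arithmetic_mean /series /= big_add1.
by apply: cesaro; rewrite cvg_shiftS.
Qed.

Theorem mainTheorem2 (d : measure_display) (Omega : measurableType d)
  (R : realType) (mu : probability Omega R) (T : Omega -> Omega) :
  measurable_fun setT T ->
  (forall A : set Omega, measurable A -> mu (T @^-1` A) = mu A) ->
  (forall (U : set Omega), measurable U -> (0 < mu U)%E ->
     forall L : nat,
       PR mu [set x | (1 <= Z T L U x)%N]
       = PR mu U * \sum_(1 <= j < L.+1) alpha1 mu T j U)
  /\
  (forall (U : nat -> set Omega) (a : nat -> R) (a1 : R),
     (forall n, measurable (U n)) ->
     (forall n, (0 < mu (U n))%E) ->
     (forall n, U n.+1 `<=` U n) ->
     (fun n => PR mu (U n)) @ \oo --> 0 ->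
     (forall L, (fun n => alpha1 mu T L (U n)) @ \oo --> a L) ->
     a @ \oo --> a1 ->
     0 < a1 ->
     exists b : nat -> R,
       (forall L, (fun n => PR mu [set x | (1 <= Z T L (U n) x)%N]
                              / (L%:R * PR mu (U n))) @ \oo --> b L)
       /\ b @ \oo --> a1).
Proof.
move=> mT T_inv; split => [U mU mU0 L|]; first exact: PR_entry_set_alpha1.
move=> U a a1 mU mU0 _ _ alpha_a a_a1 _.
exists (fun L => L%:R^-1 * \sum_(1 <= j < L.+1) a j); split; last first.
  exact: cesaro_big_nat.
move=> L; under eq_fun => n do rewrite (entry_ratio_alpha1 mu T mT T_inv L (U n) (mU n) (mU0 n)).
by apply: cvgM; [exact: cvg_cst | exact: cvg_sum_nat].
Qed.
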